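(* (Provably in $\mathsf{Z}^-_{\mathrm{FTM}\omega}$.) For any set $X$ there is a digraph $A\subseteq\omega\times\omega$ which is well-founded, extensional and vertex, such that $X=\eta_A(\mathrm{ver}(A))$.
   Context: $\mathsf{Z}^-_{\mathrm{FTM}\omega}$ is Zermelo set theory without Power Set and Choice (Extensionality, Pairing, Union, Infinity, Regularity, Separation) plus: (FC) every set $X$ has a superset $Y$ containing all finite subsets of $Y$; (TS) every set has a transitive superset; (MC) every set binary relation (digraph) $A$ that is well-founded (every nonempty subset of $\mathrm{fld}(A)=\mathrm{dom}A\cup\mathrm{ran}A$ has an element $a$ with no element $j$ of the subset satisfying $jAa$) and extensional (for $u,v\in\mathrm{fld}(A)$, $\{j:jAu\}=\{j:jAv\}$ implies $u=v$) admits a transitive set $X$ and a bijection $\eta:\mathrm{fld}(A)\to X$ with $jAk\iff\eta(j)\in\eta(k)$ (this $\eta$ is unique and denoted $\eta_A$); (Count) every set admits an injection into $\omega$. A digraph $A$ is vertex if $A=\emptyset$ or there is a unique $v=\mathrm{ver}(A)\in\mathrm{fld}(A)$ such that every $j\in\mathrm{fld}(A)$ is connected to $v$ by a finite chain $j=j_0Aj_1A\cdots Aj_K=v$ ($K\ge0$). *)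

(* We formalize "provable in Z^-_FTMw" as "true in every
   (first-order) model of Z^-_FTMw".  A model is a type with a binary
   membership relation satisfying the axioms; Separation is the first-order
   schema, stated over a deep embedding of formulas of the language {in,=}. *)

Inductive form : Type :=
  | FMem : nat -> nat -> form          (* de Bruijn: x_i in x_j *)
  | FEq  : nat -> nat -> form
  | FBot : form
  | FImp : form -> form -> form
  | FAll : form -> form.

Definition scons {V : Type} (x : V) (e : nat -> V) : nat -> V :=
  fun n => match n with 0 => x | S k => e k end.

Fixpoint sat {V : Type} (mem : V -> V -> Prop) (e : nat -> V) (phi : form) : Prop :=
  match phi with
  | FMem i j => mem (e i) (e j)
  | FEq i j => e i = e j
  | FBot => False
  | FImp p q => sat mem e p -> sat mem e q
  | FAll p => forall x : V, sat mem (scons x e) p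
  end.

Section SetNotions.
Variable V : Type.
Variable mem : V -> V -> Prop.

Definition empty (e : V) : Prop := forall x, ~ mem x e.
Definition subset (a b : V) : Prop := forall x, mem x a -> mem x b.
Definition is_upair (c a b : V) : Prop := forall z, mem z c <-> (z = a \/ z = b).
Definition is_opair (p a b : V) : Prop :=
  exists u v, is_upair u a a /\ is_upair v a b /\ is_upair p u v.
Definition is_succ (s x : V) : Prop := forall z, mem z s <-> (mem z x \/ z = x).
Definition inductive (I : V) : Prop :=
  (exists e, empty e /\ mem e I) /\
  (forall x, mem x I -> exists s, is_succ s x /\ mem s I).
Definition is_omega (w : V) : Prop :=
  inductive w /\ forall I, inductive I -> subset w I.
Definition transitive (t : V) : Prop := forall x y, mem x y -> mem y t -> mem x t.

Definition rel (A j k : V) : Prop := exists p, mem p A /\ is_opair p j k.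
Definition in_fld (A x : V) : Prop := exists y, rel A x y \/ rel A y x.
Definition is_digraph (A : V) : Prop :=
  forall p, mem p A -> exists a b, is_opair p a b.
Definition wf_dg (A : V) : Prop :=
  forall S, (exists x, mem x S) -> (forall x, mem x S -> in_fld A x) ->
    exists a, mem a S /\ forall j, mem j S -> ~ rel A j a.
Definition ext_dg (A : V) : Prop :=
  forall u v, in_fld A u -> in_fld A v ->
    (forall j, rel A j u <-> rel A j v) -> u = v.

Definition app (f a b : V) : Prop := exists p, mem p f /\ is_opair p a b.
Definition is_func (f : V) : Prop :=
  (forall p, mem p f -> exists a b, is_opair p a b) /\
  (forall a b c, app f a b -> app f a c -> b = c).
Definition dom_is (f : V) (P : V -> Prop) : Prop :=
  forall a, P a <-> exists b, app f a b.
Definition ran_is (f : V) (P : V -> Prop) : Prop :=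
  forall b, P b <-> exists a, app f a b.
Definition inj (f : V) : Prop := forall a a' b, app f a b -> app f a' b -> a = a'.

Definition iso_onto (f A X : V) : Prop :=
  is_func f /\ dom_is f (in_fld A) /\ ran_is f (fun y => mem y X) /\ inj f /\
  (forall j k a b, app f j a -> app f k b -> (rel A j k <-> mem a b)).
Definition is_collapse (A f : V) : Prop :=
  exists X, transitive X /\ iso_onto f A X.

Definition finite_set (z : V) : Prop :=
  exists w n f, is_omega w /\ mem n w /\ is_func f /\
    dom_is f (fun i => mem i n) /\ ran_is f (fun y => mem y z) /\ inj f.

(* j = j_0 A j_1 A ... A j_K = v, an (internally) finite chain indexed by
   K+1 = {0,...,K}, K in omega *)
Definition chain (A j v : V) : Prop :=
  exists w K s c e, is_omega w /\ mem K w /\ is_succ s K /\ is_func c /\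
    dom_is c (fun i => mem i s) /\ empty e /\ app c e j /\ app c K v /\
    (forall i si ci csi, mem i K -> is_succ si i -> app c i ci -> app c si csi ->
       rel A ci csi).

Definition is_ver (A v : V) : Prop :=
  in_fld A v /\ forall j, in_fld A j -> chain A j v.
Definition vertex (A : V) : Prop :=
  empty A \/ exists v, is_ver A v /\ forall u, is_ver A u -> u = v.

Definition sub_omega2 (A w : V) : Prop :=
  forall p, mem p A -> exists m n, mem m w /\ mem n w /\ is_opair p m n.

(* X = eta_A(ver(A)); for A = empty we use the convention eta_A(ver A) = empty *)
Definition denotes (A X : V) : Prop :=
  (empty A /\ empty X) \/
  (exists v f, is_ver A v /\ is_collapse A f /\ app f v X).

End SetNotions.

Arguments empty {V}. Arguments subset {V}. Arguments is_upair {V}. Arguments is_opair {V}.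
Arguments is_succ {V}. Arguments inductive {V}. Arguments is_omega {V}. Arguments transitive {V}.
Arguments rel {V}. Arguments in_fld {V}. Arguments is_digraph {V}. Arguments wf_dg {V}. Arguments ext_dg {V}.
Arguments app {V}. Arguments is_func {V}. Arguments dom_is {V}. Arguments ran_is {V}. Arguments inj {V}.
Arguments iso_onto {V}. Arguments is_collapse {V}. Arguments finite_set {V}. Arguments chain {V}.
Arguments is_ver {V}. Arguments vertex {V}. Arguments sub_omega2 {V}. Arguments denotes {V}.

Record ZFTM : Type := {
  zV : Type;
  zmem : zV -> zV -> Prop;
  ax_ext : forall a b, (forall x, zmem x a <-> zmem x b) -> a = b;
  ax_pair : forall a b, exists c, is_upair zmem c a b;
  ax_union : forall a, exists u, forall z, zmem z u <-> exists y, zmem y a /\ zmem z y;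
  ax_inf : exists I, inductive zmem I;
  ax_reg : forall a, (exists x, zmem x a) ->
             exists x, zmem x a /\ forall y, zmem y x -> ~ zmem y a;
  ax_sep : forall (phi : form) (e : nat -> zV) (a : zV),
             exists b, forall x, zmem x b <-> (zmem x a /\ sat zmem (scons x e) phi);
  ax_FC : forall x, exists y, subset zmem x y /\
             forall z, finite_set zmem z -> subset zmem z y -> zmem z y;
  ax_TS : forall x, exists t, transitive zmem t /\ subset zmem x t;
  ax_MC : forall A, is_digraph zmem A -> wf_dg zmem A -> ext_dg zmem A ->
             exists X f, transitive zmem X /\ iso_onto zmem f A X;
  ax_count : forall x, exists w f, is_omega zmem w /\ is_func zmem f /\
             dom_is zmem f (fun a => zmem a x) /\
             (forall a b, app zmem f a b -> zmem b w) /\ inj zmem f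
}.

From Pilot Require Import Defs.
From Stdlib Require Import Classical ClassicalEpsilon Setoid.

(* Let T be the least transitive set containing X, i.e. {X} ∪ TC(X), and f : T → ω
   an injection given by Count.  The image A = {(f a, f b) : a ∈ b in T} of the
   membership relation of T is a set because FC provides a superset Y of ω that
   contains all Kuratowski pairs of naturals, from which A is separated.  A is
   well-founded and extensional because ∈ is.  The elements of T joined to X by a
   finite ∈-chain form a transitive set containing X, hence all of T, while no edge
   leaves f X because X ∉ TC(X); so f X is the unique vertex of A.  By ∈-induction
   on T the collapse of A inverts f, so it sends f X to X.  If X is empty, so is A. *)

(* Separation, ∈-induction and ω-induction hold only for properties expressed by
   formulas; the builders below take the de Bruijn indices of their free variables. *)

Definition fNot p := FImp p FBot.
Definition fOr p q := FImp (fNot p) q.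
Definition fAnd p q := fNot (FImp p (fNot q)).
Definition fEx p := fNot (FAll (fNot p)).
Definition fIff p q := fAnd (FImp p q) (FImp q p).

Definition fupair c a b :=
  FAll (fIff (FMem 0 (S c)) (fOr (FEq 0 (S a)) (FEq 0 (S b)))).
Definition fopair p a b :=
  fEx (fEx (fAnd (fupair 1 (S (S a)) (S (S a)))
    (fAnd (fupair 0 (S (S a)) (S (S b))) (fupair (S (S p)) 1 0)))).
Definition fapp f a b := fEx (fAnd (FMem 0 (S f)) (fopair 0 (S a) (S b))).
Definition fsucc s x := FAll (fIff (FMem 0 (S s)) (fOr (FMem 0 (S x)) (FEq 0 (S x)))).
Definition ftransitive t :=
  FAll (FAll (FImp (FMem 1 0) (FImp (FMem 0 (S (S t))) (FMem 1 (S (S t)))))).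
Definition fsubset a b := FAll (FImp (FMem 0 (S a)) (FMem 0 (S b))).
Definition ffunc c :=
  fAnd (FAll (FImp (FMem 0 (S c)) (fEx (fEx (fopair 2 1 0)))))
    (FAll (FAll (FAll (FImp (fapp (S (S (S c))) 2 1)
       (FImp (fapp (S (S (S c))) 2 0) (FEq 1 0)))))).
Definition fdom c s := FAll (fIff (FMem 0 (S s)) (fEx (fapp (S (S c)) 1 0))).

Section Satisfaction.
Variables (V : Type) (mem : V -> V -> Prop).

Lemma sat_fNot e p : sat mem e (fNot p) <-> ~ sat mem e p.
Proof. reflexivity. Qed.

Lemma sat_fOr e p q : sat mem e (fOr p q) <-> sat mem e p \/ sat mem e q.
Proof. simpl; tauto. Qed.

Lemma sat_fAnd e p q : sat mem e (fAnd p q) <-> sat mem e p /\ sat mem e q.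
Proof. simpl; tauto. Qed.

Lemma sat_fEx e p : sat mem e (fEx p) <-> exists x, sat mem (scons x e) p.
Proof.
  simpl; split.
  - intro H; apply NNPP; intro Hn; apply H; intros x Hx; apply Hn; eauto.
  - intros [x Hx] H; exact (H x Hx).
Qed.

Lemma sat_fIff e p q : sat mem e (fIff p q) <-> (sat mem e p <-> sat mem e q).
Proof. unfold fIff; rewrite sat_fAnd; simpl; tauto. Qed.

End Satisfaction.

Ltac sat_connectives :=
  first [ progress cbn [sat scons] | setoid_rewrite sat_fIff | setoid_rewrite sat_fEx
        | setoid_rewrite sat_fAnd | setoid_rewrite sat_fOr | setoid_rewrite sat_fNot ].

Section SatisfactionDefs.
Variables (V : Type) (mem : V -> V -> Prop).

Lemma sat_fupair e c a b : sat mem e (fupair c a b) <-> is_upair mem (e c) (e a) (e b).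
Proof. unfold fupair, is_upair; repeat sat_connectives; reflexivity. Qed.

Lemma sat_fopair e p a b : sat mem e (fopair p a b) <-> is_opair mem (e p) (e a) (e b).
Proof.
  unfold fopair, is_opair.
  repeat (first [setoid_rewrite sat_fupair | sat_connectives]); reflexivity.
Qed.

Lemma sat_fapp e f a b : sat mem e (fapp f a b) <-> app mem (e f) (e a) (e b).
Proof.
  unfold fapp, app.
  repeat (first [setoid_rewrite sat_fopair | sat_connectives]); reflexivity.
Qed.

Lemma sat_fsucc e s x : sat mem e (fsucc s x) <-> is_succ mem (e s) (e x).
Proof. unfold fsucc, is_succ; repeat sat_connectives; reflexivity. Qed.

Lemma sat_ffunc e c : sat mem e (ffunc c) <-> is_func mem (e c).
Proof.
  unfold ffunc, is_func.
  repeat (first [setoid_rewrite sat_fapp | setoid_rewrite sat_fopair | sat_connectives]).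
  reflexivity.
Qed.

Lemma sat_fdom e c s : sat mem e (fdom c s) <-> dom_is mem (e c) (fun a => mem a (e s)).
Proof.
  unfold fdom, dom_is.
  repeat (first [setoid_rewrite sat_fapp | sat_connectives]); reflexivity.
Qed.

End SatisfactionDefs.

Ltac sat_simpl :=
  repeat (first [ setoid_rewrite sat_ffunc | setoid_rewrite sat_fdom
                | setoid_rewrite sat_fapp | setoid_rewrite sat_fopair
                | setoid_rewrite sat_fupair | setoid_rewrite sat_fsucc
                | sat_connectives ]);
  cbn [scons].

Definition codes {V : Type} (mem : V -> V -> Prop) (A X : V) : Prop :=
  (forall w, is_omega mem w -> sub_omega2 mem A w) /\
  is_digraph mem A /\ wf_dg mem A /\ ext_dg mem A /\ vertex mem A /\ denotes mem A X.

Section Model.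
Variable M : ZFTM.
Notation V := (zV M).
Notation mem := (zmem M).
Notation "x ∈ y" := (zmem M x y) (at level 70).

Lemma set_ext (a b : V) : (forall x, x ∈ a <-> x ∈ b) -> a = b.
Proof. exact (ax_ext M a b). Qed.

Lemma separation phi e a : exists b, forall x, x ∈ b <-> x ∈ a /\ sat mem (scons x e) phi.
Proof. exact (ax_sep M phi e a). Qed.

Definition upair (a b : V) : V :=
  proj1_sig (constructive_indefinite_description _ (ax_pair M a b)).

Lemma in_upair a b z : z ∈ upair a b <-> z = a \/ z = b.
Proof. exact (proj2_sig (constructive_indefinite_description _ (ax_pair M a b)) z). Qed.

Lemma is_upair_eq c a b : is_upair mem c a b <-> c = upair a b.
Proof.
  split.
  - intro H; apply set_ext; intro z; rewrite in_upair; apply H.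
  - intros ->; exact (in_upair a b).
Qed.

Lemma upair_l a b : a ∈ upair a b.
Proof. apply in_upair; auto. Qed.

Lemma upair_r a b : b ∈ upair a b.
Proof. apply in_upair; auto. Qed.

Definition sing (a : V) : V := upair a a.

Lemma in_sing a z : z ∈ sing a <-> z = a.
Proof. unfold sing; rewrite in_upair; tauto. Qed.

Lemma sing_self a : a ∈ sing a.
Proof. apply upair_l. Qed.

Definition opair (a b : V) : V := upair (sing a) (upair a b).

Lemma is_opair_eq p a b : is_opair mem p a b <-> p = opair a b.
Proof.
  unfold is_opair; split.
  - intros (u & w & Hu & Hw & Hp); apply is_upair_eq in Hu, Hw, Hp; subst; reflexivity.
  - intros ->; exists (sing a), (upair a b); rewrite !is_upair_eq; auto.
Qed.

Lemma opair_inj a b c d : opair a b = opair c d -> a = c /\ b = d.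
Proof.
  intro H.
  assert (Hac : a = c).
  { assert (Ha : sing a ∈ opair c d) by (rewrite <- H; apply upair_l).
    apply in_upair in Ha as [E | E].
    - apply in_sing; rewrite <- E; apply sing_self.
    - symmetry; apply in_sing; rewrite E; apply upair_l. }
  subst c; split; auto.
  assert (Hb : upair a b ∈ opair a d) by (rewrite <- H; apply upair_r).
  assert (Hd : upair a d ∈ opair a b) by (rewrite H; apply upair_r).
  apply in_upair in Hb as [E | E].
  - assert (b = a) by (apply in_sing; rewrite <- E; apply upair_r); subst b.
    symmetry; apply in_sing.
    apply in_upair in Hd as [E' | E']; unfold sing in *; rewrite <- E'; apply upair_r.
  - assert (Hb : b ∈ upair a d) by (rewrite <- E; apply upair_r).
    apply in_upair in Hb as [-> | ->]; auto.
    symmetry; apply in_sing; unfold sing; rewrite E; apply upair_r.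
Qed.

Lemma app_opair f a b : app mem f a b <-> opair a b ∈ f.
Proof.
  unfold app; split.
  - intros (p & Hp & Ho); apply is_opair_eq in Ho; subst; auto.
  - intro H; exists (opair a b); rewrite is_opair_eq; auto.
Qed.

Lemma rel_opair A a b : rel mem A a b <-> opair a b ∈ A.
Proof. apply app_opair. Qed.

Lemma app_functional c a b b' : is_func mem c -> app mem c a b -> app mem c a b' -> b = b'.
Proof. intro H; apply H. Qed.

Definition union2 (a b : V) : V :=
  proj1_sig (constructive_indefinite_description _ (ax_union M (upair a b))).

Lemma in_union2 a b z : z ∈ union2 a b <-> z ∈ a \/ z ∈ b.
Proof.
  unfold union2; destruct (constructive_indefinite_description _ _) as [u Hu]; cbn.
  rewrite Hu; split.
  - intros (y & Hy & Hz); apply in_upair in Hy as [-> | ->]; auto.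
  - intros [H | H]; [exists a | exists b]; auto using upair_l, upair_r.
Qed.

Definition succ (x : V) : V := union2 x (sing x).

Lemma in_succ x z : z ∈ succ x <-> z ∈ x \/ z = x.
Proof. unfold succ; rewrite in_union2, in_sing; reflexivity. Qed.

Lemma is_succ_eq s x : is_succ mem s x <-> s = succ x.
Proof.
  split.
  - intro H; apply set_ext; intro z; rewrite in_succ; apply H.
  - intros ->; exact (in_succ x).
Qed.

Lemma succ_self x : x ∈ succ x.
Proof. apply in_succ; auto. Qed.

Lemma mem_irrefl x : ~ x ∈ x.
Proof.
  intro H; destruct (ax_reg M (sing x)) as (y & Hy & Hmin); [exists x; apply sing_self |].
  apply in_sing in Hy; subst y; exact (Hmin x H (sing_self x)).
Qed.

Lemma mem_asym x y : x ∈ y -> ~ y ∈ x.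
Proof.
  intros Hxy Hyx; destruct (ax_reg M (upair x y)) as (m & Hm & Hmin); [exists x; apply upair_l |].
  apply in_upair in Hm as [-> | ->].
  - exact (Hmin y Hyx (upair_r x y)).
  - exact (Hmin x Hxy (upair_l x y)).
Qed.

Lemma succ_inj a b : succ a = succ b -> a = b.
Proof.
  intro H; apply NNPP; intro Hab.
  assert (Ha : a ∈ succ b) by (rewrite <- H; apply succ_self).
  assert (Hb : b ∈ succ a) by (rewrite H; apply succ_self).
  apply in_succ in Ha as [Ha | ->]; [| auto].
  apply in_succ in Hb as [Hb | ->]; [| auto].
  exact (mem_asym a b Ha Hb).
Qed.

Lemma mem_ind phi e a :
  (forall z, z ∈ a -> (forall y, y ∈ z -> y ∈ a -> sat mem (scons y e) phi) ->
     sat mem (scons z e) phi) ->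
  forall z, z ∈ a -> sat mem (scons z e) phi.
Proof.
  intros Hstep z Hz; apply NNPP; intro Hn.
  destruct (separation (fNot phi) e a) as [b Hb].
  destruct (ax_reg M b) as (m & Hm & Hmin); [exists z; apply Hb; auto |].
  apply Hb in Hm as [Hma Hmn]; apply Hmn, Hstep; auto.
  intros y Hy Hya; apply NNPP; intro Hyn.
  apply (Hmin y Hy), Hb; auto.
Qed.

Lemma omega_exists : exists w : V, is_omega mem w.
Proof.
  destruct (ax_inf M) as [I _].
  destruct (ax_count M I) as (w & _ & Hw & _); eauto.
Qed.

Definition omega : V := proj1_sig (constructive_indefinite_description _ omega_exists).

Lemma omega_is_omega : is_omega mem omega.
Proof. exact (proj2_sig (constructive_indefinite_description _ omega_exists)). Qed.

Lemma is_omega_eq w : is_omega mem w -> w = omega.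
Proof.
  intros [Hw Hmin]; destruct omega_is_omega as [Hom Hommin].
  apply set_ext; intro x; split; [apply Hmin | apply Hommin]; assumption.
Qed.

Definition empty_set : V :=
  proj1_sig (constructive_indefinite_description _ (proj1 (proj1 omega_is_omega))).

Lemma empty_set_spec : empty mem empty_set /\ empty_set ∈ omega.
Proof.
  exact (proj2_sig (constructive_indefinite_description _ (proj1 (proj1 omega_is_omega)))).
Qed.

Lemma notin_empty_set x : ~ x ∈ empty_set.
Proof. apply empty_set_spec. Qed.

Lemma empty_set_in_omega : empty_set ∈ omega.
Proof. apply empty_set_spec. Qed.

Lemma empty_eq e : empty mem e <-> e = empty_set.
Proof.
  split.
  - intro H; apply set_ext; intro x; split; intro Hx.
    + destruct (H x Hx).
    + destruct (notin_empty_set x Hx).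
  - intros ->; exact notin_empty_set.
Qed.

Lemma succ_neq_empty_set a : succ a <> empty_set.
Proof. intro H; apply (notin_empty_set a); rewrite <- H; apply succ_self. Qed.

Lemma succ_in_omega n : n ∈ omega -> succ n ∈ omega.
Proof.
  intro Hn; destruct (proj2 (proj1 omega_is_omega) n Hn) as (s & Hs & Hsw).
  apply is_succ_eq in Hs; subst; exact Hsw.
Qed.

Lemma omega_ind phi e :
  sat mem (scons empty_set e) phi ->
  (forall n, n ∈ omega -> sat mem (scons n e) phi -> sat mem (scons (succ n) e) phi) ->
  forall n, n ∈ omega -> sat mem (scons n e) phi.
Proof.
  intros H0 HS; destruct (separation phi e omega) as [b Hb].
  assert (Hind : inductive mem b).
  { split.
    - exists empty_set; split; [apply empty_eq; reflexivity |].
      apply Hb; auto using empty_set_in_omega.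
    - intros x Hx; apply Hb in Hx as [Hxw Hx].
      exists (succ x); split; [apply is_succ_eq; reflexivity |].
      apply Hb; auto using succ_in_omega. }
  intros n Hn; apply (proj2 omega_is_omega b Hind), Hb in Hn; tauto.
Qed.

Definition fsucc_decomp :=
  FAll (FImp (fsucc 0 1) (FAll (fIff (FMem 0 1)
    (fOr (FEq 0 3) (fEx (fAnd (FMem 0 3) (fAnd (FMem 0 5) (fsucc 1 0)))))))).

Lemma sat_fsucc_decomp n e :
  sat mem (scons n (scons empty_set (scons omega e))) fsucc_decomp <->
  forall s, is_succ mem s n -> forall x,
    (x ∈ s <-> x = empty_set \/ exists m, m ∈ n /\ m ∈ omega /\ is_succ mem x m).
Proof. unfold fsucc_decomp; sat_simpl; reflexivity. Qed.

Lemma in_succ_omega n : n ∈ omega -> forall x,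
  x ∈ succ n <-> x = empty_set \/ exists m, m ∈ n /\ m ∈ omega /\ x = succ m.
Proof.
  intros Hn x.
  enough (H : sat mem (scons n (scons empty_set (scons omega (fun _ => empty_set))))
                fsucc_decomp).
  { rewrite sat_fsucc_decomp in H.
    rewrite (H (succ n)) by (apply is_succ_eq; reflexivity).
    setoid_rewrite is_succ_eq; reflexivity. }
  revert n Hn; apply omega_ind; intros *; rewrite ?sat_fsucc_decomp.
  - intros s Hs y; apply is_succ_eq in Hs; subst s; rewrite in_succ; split.
    + intros [H | H]; [destruct (notin_empty_set _ H) | auto].
    + intros [H | (m & Hm & _)]; [auto | destruct (notin_empty_set _ Hm)].
  - intros Hn IH s Hs y; apply is_succ_eq in Hs; subst s.
    rewrite in_succ, (IH (succ n)) by (apply is_succ_eq; reflexivity).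
    setoid_rewrite is_succ_eq; setoid_rewrite in_succ; split.
    + intros [[H | (m & Hm & Hmw & ->)] | ->]; eauto 7.
    + intros [H | (m & [Hm | ->] & Hmw & ->)]; eauto 7.
Qed.

Lemma omega_trans m n : m ∈ n -> n ∈ omega -> m ∈ omega.
Proof.
  intros Hm Hn; assert (Hs : m ∈ succ n) by (apply in_succ; auto).
  apply (in_succ_omega n Hn) in Hs as [-> | (k & _ & Hk & ->)].
  - apply empty_set_in_omega.
  - apply succ_in_omega, Hk.
Qed.

Definition in_closure (x y : V) : Prop :=
  forall s, Defs.transitive mem s -> subset mem y s -> x ∈ s.

Definition fmem_closure x y :=
  FAll (FImp (ftransitive 0) (FImp (fsubset (S y) 0) (FMem (S x) 0))).

Definition fclosure_step :=
  fOr (FMem 0 1) (fEx (fAnd (FMem 0 2) (fmem_closure 1 0))).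

Lemma sat_fclosure_step x z e :
  sat mem (scons x (scons z e)) fclosure_step <->
  x ∈ z \/ exists y, y ∈ z /\ in_closure x y.
Proof. unfold fclosure_step; sat_simpl; reflexivity. Qed.

(* If z ∈ TC(z), then z ∈ z or z ∈ TC(y) for some y ∈ z, whence y ∈ TC(y). *)
Lemma not_in_own_closure a z : Defs.transitive mem a -> z ∈ a -> ~ in_closure z z.
Proof.
  intros Ha; revert z.
  change (forall z, z ∈ a -> sat mem (scons z (fun _ => a)) (fNot (fmem_closure 0 0))).
  apply mem_ind; intros z Hz IH Hzz.
  destruct (separation fclosure_step (scons z (fun _ => a)) a) as [sz Hsz].
  assert (Hsz_trans : Defs.transitive mem sz).
  { intros x b Hxb Hb; apply Hsz in Hb as [Hba Hb]; apply Hsz; split; [exact (Ha x b Hxb Hba) |].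
    apply sat_fclosure_step in Hb; apply sat_fclosure_step; right.
    destruct Hb as [Hbz | (y & Hy & Hby)].
    - exists b; split; [exact Hbz |]; intros s _ Hbs; exact (Hbs x Hxb).
    - exists y; split; [exact Hy |]; intros s Hs Hys; exact (Hs x b Hxb (Hby s Hs Hys)). }
  assert (Hz_sub : subset mem z sz).
  { intros x Hx; apply Hsz; split; [exact (Ha x z Hx Hz) |]; apply sat_fclosure_step; auto. }
  pose proof (Hzz sz Hsz_trans Hz_sub) as Hz_sz.
  apply Hsz, proj2, sat_fclosure_step in Hz_sz as [Hz_self | (y & Hy & Hzy)].
  - exact (mem_irrefl z Hz_self).
  - apply (IH y Hy (Ha y z Hy Hz)); intros s Hs Hys; exact (Hs y z Hy (Hzy s Hs Hys)).
Qed.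

Definition fmem_least_transitive :=
  FAll (FImp (ftransitive 0) (FImp (FMem 2 0) (FMem 1 0))).

Lemma sat_fmem_least_transitive z X e :
  sat mem (scons z (scons X e)) fmem_least_transitive <->
  forall s, Defs.transitive mem s -> X ∈ s -> z ∈ s.
Proof. reflexivity. Qed.

Lemma least_transitive_exists X : exists T,
  X ∈ T /\ Defs.transitive mem T /\
  forall s, Defs.transitive mem s -> X ∈ s -> subset mem T s.
Proof.
  destruct (ax_TS M (sing X)) as (t & Ht & HXt); specialize (HXt X (sing_self X)).
  destruct (separation fmem_least_transitive (scons X (fun _ => X)) t) as [T HT].
  setoid_rewrite sat_fmem_least_transitive in HT.
  exists T; split; [| split].
  - apply HT; auto.
  - intros a b Hab Hb; apply HT in Hb as [Hbt Hb]; apply HT.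
    split; [exact (Ht a b Hab Hbt) |]; intros s Hs HXs; exact (Hs a b Hab (Hb s Hs HXs)).
  - intros s Hs HXs z Hz; apply HT in Hz; apply Hz; auto.
Qed.

Section LeastTransitive.
Variables X T : V.
Hypothesis X_in_T : X ∈ T.
Hypothesis T_transitive : Defs.transitive mem T.
Hypothesis T_least : forall s, Defs.transitive mem s -> X ∈ s -> subset mem T s.

(* b ∈ TC({X}) = {X} ∪ TC(X), and b ≠ X since X ∉ X. *)
Lemma in_closure_of_mem_least b : b ∈ T -> X ∈ b -> in_closure X X.
Proof.
  intros Hb HXb s Hs HXs.
  assert (Hs' : Defs.transitive mem (union2 s (sing X))).
  { intros a c Hac Hc; apply in_union2; left.
    apply in_union2 in Hc as [Hc | ->%in_sing]; [exact (Hs a c Hac Hc) | exact (HXs a Hac)]. }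
  assert (HbsX : b ∈ union2 s (sing X)).
  { apply (T_least _ Hs'); [| exact Hb]; apply in_union2; right; apply sing_self. }
  apply in_union2 in HbsX as [Hbs | ->%in_sing].
  - exact (Hs X b HXb Hbs).
  - destruct (mem_irrefl X HXb).
Qed.

Lemma notin_mem_least b : b ∈ T -> ~ X ∈ b.
Proof.
  intros Hb HXb; apply (not_in_own_closure T X T_transitive X_in_T).
  exact (in_closure_of_mem_least b Hb HXb).
Qed.

End LeastTransitive.

Lemma app_upair_opair i1 y1 i2 y2 i y :
  app mem (upair (opair i1 y1) (opair i2 y2)) i y <-> (i = i1 /\ y = y1) \/ (i = i2 /\ y = y2).
Proof.
  rewrite app_opair, in_upair; split.
  - intros [H | H]; apply opair_inj in H; tauto.
  - intros [[-> ->] | [-> ->]]; auto.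
Qed.

Lemma in_one x : x ∈ succ empty_set <-> x = empty_set.
Proof.
  rewrite in_succ; split; [intros [H | H] | auto]; [destruct (notin_empty_set _ H) | exact H].
Qed.

Lemma graph_upair_opair_func i1 y1 i2 y2 :
  (i1 = i2 -> y1 = y2) -> is_func mem (upair (opair i1 y1) (opair i2 y2)).
Proof.
  intro Hfun; split.
  - intros p Hp; apply in_upair in Hp as [-> | ->]; eexists _, _; apply is_opair_eq; reflexivity.
  - intros x y z H1 H2; apply app_upair_opair in H1, H2.
    destruct H1 as [[-> ->] | [-> ->]], H2 as [[E ->] | [E ->]]; auto.
    symmetry; auto.
Qed.

Lemma upair_finite a b : finite_set mem (upair a b).
Proof.
  assert (H01 : empty_set <> succ empty_set) by (intro E; exact (succ_neq_empty_set _ (eq_sym E))).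
  destruct (classic (a = b)) as [<- | Hab].
  - exists omega, (succ empty_set), (upair (opair empty_set a) (opair empty_set a)).
    split; [exact omega_is_omega |]; split; [apply succ_in_omega, empty_set_in_omega |].
    split; [apply graph_upair_opair_func; auto |].
    split; [| split]; [intro i; rewrite in_one | intro y; rewrite in_upair | intros i i' y];
      setoid_rewrite app_upair_opair.
    + split; [intros ->; eauto | intros [y [[-> _] | [-> _]]]; reflexivity].
    + split; [intros [-> | ->]; eauto | intros [i [[_ ->] | [_ ->]]]; auto].
    + intros [[-> _] | [-> _]] [[-> _] | [-> _]]; reflexivity.
  - exists omega, (succ (succ empty_set)), (upair (opair empty_set a) (opair (succ empty_set) b)).
    split; [exact omega_is_omega |].
    split; [apply succ_in_omega, succ_in_omega, empty_set_in_omega |].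
    split; [apply graph_upair_opair_func; congruence |].
    split; [| split];
      [intro i; rewrite in_succ, in_one | intro y; rewrite in_upair | intros i i' y];
      setoid_rewrite app_upair_opair.
    + split; [intros [-> | ->]; eauto | intros [y [[-> _] | [-> _]]]; auto].
    + split; [intros [-> | ->]; eauto | intros [i [[_ ->] | [_ ->]]]; auto].
    + intros [[-> ->] | [-> ->]] [[-> E] | [-> E]]; congruence.
Qed.

(* Values are kept in ω so that a chain extended at its start can be separated from Y. *)
Definition omega_chain (A v n : V) : Prop :=
  exists K s c, K ∈ omega /\ is_succ mem s K /\ is_func mem c /\
    dom_is mem c (fun i => i ∈ s) /\ app mem c empty_set n /\ app mem c K v /\
    (forall i y, app mem c i y -> y ∈ omega) /\
    (forall i si ci csi, i ∈ K -> is_succ mem si i -> app mem c i ci -> app mem c si csi ->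
       rel mem A ci csi).

Lemma omega_chain_chain A v n : omega_chain A v n -> chain mem A n v.
Proof.
  intros (K & s & c & HK & Hs & Hc & Hdom & H0 & HK' & _ & Hstep).
  exists omega, K, s, c, empty_set.
  split; [exact omega_is_omega |]; do 4 (split; [assumption |]).
  split; [apply empty_eq; reflexivity |]; auto.
Qed.

Lemma omega_chain_refl A v : v ∈ omega -> omega_chain A v v.
Proof.
  intro Hv; set (c := upair (opair empty_set v) (opair empty_set v)).
  assert (Hc : forall i y, app mem c i y <-> i = empty_set /\ y = v)
    by (intros i y; unfold c; rewrite app_upair_opair; tauto).
  exists empty_set, (succ empty_set), c; split; [apply empty_set_in_omega |].
  split; [apply is_succ_eq; reflexivity |].
  split; [apply graph_upair_opair_func; auto |].
  split.
  { intro i; rewrite in_one; setoid_rewrite Hc.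
    split; [intros ->; eauto | intros [y [-> _]]; reflexivity]. }
  split; [apply Hc; auto |]; split; [apply Hc; auto |]; split.
  - intros i y [_ ->]%Hc; exact Hv.
  - intros i si ci csi Hi; destruct (notin_empty_set _ Hi).
Qed.

Definition fchain_image :=
  fEx (fAnd (fapp 2 1 0) (fEx (fEx (fEx (fAnd (FMem 2 8) (fAnd (fsucc 1 2)
  (fAnd (ffunc 0) (fAnd (fdom 0 1) (fAnd (fapp 0 9 3) (fAnd (fapp 0 2 7)
  (fAnd (FAll (FAll (FImp (fapp 2 1 0) (FMem 0 10))))
   (FAll (FAll (FAll (FAll (FImp (FMem 3 6) (FImp (fsucc 2 3)
     (FImp (fapp 4 3 1) (FImp (fapp 4 2 0) (fapp 10 1 0)))))))))))))))))))).

Lemma sat_fchain_image z f A v e :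
  sat mem (scons z (scons f (scons A (scons v (scons omega (scons empty_set e)))))) fchain_image
  <-> exists n, app mem f z n /\ omega_chain A v n.
Proof. unfold fchain_image, omega_chain; sat_simpl; reflexivity. Qed.

Section Shift.
Variables c c' j : V.
Hypothesis shift_pairs : forall p, p ∈ c' -> exists x y, is_opair mem p x y.
Hypothesis app_shift : forall x y,
  app mem c' x y <-> (x = empty_set /\ y = j) \/ exists i, x = succ i /\ app mem c i y.

Lemma app_shift_zero y : app mem c' empty_set y -> y = j.
Proof.
  intros [[_ ->] | (i & E & _)]%app_shift; [reflexivity |].
  destruct (succ_neq_empty_set i (eq_sym E)).
Qed.

Lemma app_shift_succ i y : app mem c' (succ i) y -> app mem c i y.
Proof.
  intros [[E _] | (i' & E & Hy)]%app_shift.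
  - destruct (succ_neq_empty_set i E).
  - apply succ_inj in E; subst i'; exact Hy.
Qed.

Lemma shift_func : is_func mem c -> is_func mem c'.
Proof.
  intro Hc; split; [exact shift_pairs |].
  intros x y y' [[-> ->] | (i & -> & Hy)]%app_shift Hy'.
  - symmetry; exact (app_shift_zero y' Hy').
  - exact (app_functional c i y y' Hc Hy (app_shift_succ i y' Hy')).
Qed.

Lemma shift_dom K : K ∈ omega -> dom_is mem c (fun i => i ∈ succ K) ->
  dom_is mem c' (fun i => i ∈ succ (succ K)).
Proof.
  intros HK Hdom x; rewrite (in_succ_omega (succ K) (succ_in_omega K HK)).
  setoid_rewrite app_shift; split.
  - intros [-> | (m & Hm & _ & ->)]; [eauto |].
    apply Hdom in Hm as [y Hy]; eauto 6.
  - intros [y [[-> _] | (i & -> & Hiy)]]; [auto | right].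
    assert (Hi : i ∈ succ K) by (apply Hdom; eauto).
    exists i; split; [exact Hi |]; split; [| reflexivity].
    exact (omega_trans i (succ K) Hi (succ_in_omega K HK)).
Qed.

End Shift.

Section FiniteClosed.
Variable Y : V.
Hypothesis omega_sub_Y : subset mem omega Y.
Hypothesis Y_finite_closed : forall z, finite_set mem z -> subset mem z Y -> z ∈ Y.

Lemma upair_in_finite_closed a b : a ∈ Y -> b ∈ Y -> upair a b ∈ Y.
Proof.
  intros Ha Hb; apply Y_finite_closed; [apply upair_finite |].
  intros x Hx; apply in_upair in Hx as [-> | ->]; assumption.
Qed.

Lemma opair_omega_in_finite_closed a b : a ∈ omega -> b ∈ omega -> opair a b ∈ Y.
Proof. intros Ha Hb; unfold opair, sing; auto using upair_in_finite_closed. Qed.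

Definition fshift_graph :=
  fOr (fopair 0 3 2)
    (fEx (fEx (fEx (fAnd (fapp 4 2 1) (fAnd (fsucc 0 2) (fopair 3 0 1)))))).

Lemma sat_fshift_graph p c j e :
  sat mem (scons p (scons c (scons j (scons empty_set e)))) fshift_graph <->
  is_opair mem p empty_set j \/
  exists i y si, app mem c i y /\ is_succ mem si i /\ is_opair mem p si y.
Proof. unfold fshift_graph; sat_simpl; reflexivity. Qed.

Lemma shift_exists c j : j ∈ omega ->
  (forall i y, app mem c i y -> i ∈ omega /\ y ∈ omega) ->
  exists c', (forall p, p ∈ c' -> exists x y, is_opair mem p x y) /\
    forall x y, app mem c' x y <->
      (x = empty_set /\ y = j) \/ exists i, x = succ i /\ app mem c i y.
Proof.
  intros Hj Hc.
  destruct (separation fshift_graph (scons c (scons j (scons empty_set (fun _ => j)))) Y)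
    as [c' Hc'].
  setoid_rewrite sat_fshift_graph in Hc'.
  exists c'; split.
  - intros p [_ [Hp | (i & y & si & _ & _ & Hp)]]%Hc'; eauto.
  - intros x y; rewrite app_opair, Hc'.
    setoid_rewrite is_opair_eq; setoid_rewrite is_succ_eq; split.
    + intros [_ [E | (i & b & si & Hib & -> & E)]]; apply opair_inj in E as [-> ->]; eauto.
    + intros [[-> ->] | (i & -> & Hiy)].
      * split; [apply opair_omega_in_finite_closed; auto using empty_set_in_omega | auto].
      * destruct (Hc i y Hiy) as [Hi Hy].
        split; [apply opair_omega_in_finite_closed; auto using succ_in_omega |].
        right; exists i, y, (succ i); auto.
Qed.

Lemma omega_chain_cons A v j k : j ∈ omega -> rel mem A j k ->
  omega_chain A v k -> omega_chain A v j.
Proof.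
  intros Hj Hjk (K & s & c & HK & Hs & Hc & Hdom & H0 & HKv & Hval & Hstep).
  apply is_succ_eq in Hs; subst s.
  assert (Hc_omega : forall i y, app mem c i y -> i ∈ omega /\ y ∈ omega).
  { intros i y Hiy; split; [| exact (Hval i y Hiy)].
    assert (Hi : i ∈ succ K) by (apply Hdom; eauto).
    exact (omega_trans i (succ K) Hi (succ_in_omega K HK)). }
  destruct (shift_exists c j Hj Hc_omega) as (c' & Hpairs & Happ).
  exists (succ K), (succ (succ K)), c'.
  split; [apply succ_in_omega, HK |].
  split; [apply is_succ_eq; reflexivity |].
  split; [exact (shift_func c c' j Hpairs Happ Hc) |].
  split; [exact (shift_dom c c' j Happ K HK Hdom) |].
  split; [apply Happ; auto |].
  split; [apply Happ; eauto |].
  split.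
  - intros i y [[_ ->] | (i' & _ & Hy)]%Happ; [exact Hj | exact (Hval i' y Hy)].
  - intros i si ci csi Hi ->%is_succ_eq Hci Hcsi.
    apply (in_succ_omega K HK) in Hi as [-> | (m & Hm & _ & ->)].
    + apply (app_shift_zero c c' j Happ) in Hci as ->.
      apply (app_shift_succ c c' j Happ) in Hcsi.
      rewrite (app_functional c empty_set csi k Hc Hcsi H0); exact Hjk.
    + apply (app_shift_succ c c' j Happ) in Hci, Hcsi.
      exact (Hstep m (succ m) ci csi Hm (proj2 (is_succ_eq _ _) eq_refl) Hci Hcsi).
Qed.

Definition fimage_pair :=
  fEx (fEx (fEx (fEx (fAnd (FMem 3 2)
    (fAnd (fapp 5 3 1) (fAnd (fapp 5 2 0) (fopair 4 1 0))))))).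

Lemma sat_fimage_pair p f e :
  sat mem (scons p (scons f e)) fimage_pair <->
  exists a b m n, a ∈ b /\ app mem f a m /\ app mem f b n /\ is_opair mem p m n.
Proof. unfold fimage_pair; sat_simpl; reflexivity. Qed.

Lemma image_digraph_exists f : (forall a m, app mem f a m -> m ∈ omega) ->
  exists A, (forall p, p ∈ A -> exists m n, m ∈ omega /\ n ∈ omega /\ p = opair m n) /\
    forall j k, rel mem A j k <-> exists a b, a ∈ b /\ app mem f a j /\ app mem f b k.
Proof.
  intro Hf.
  destruct (separation fimage_pair (scons f (fun _ => f)) Y) as [A HA].
  setoid_rewrite sat_fimage_pair in HA; setoid_rewrite is_opair_eq in HA.
  exists A; split.
  - intros p [_ (a & b & m & n & _ & Ham & Hbn & ->)]%HA; exists m, n; eauto.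
  - intros j k; rewrite rel_opair, HA; split.
    + intros [_ (a & b & m & n & Hab & Ham & Hbn & E)].
      apply opair_inj in E as [-> ->]; eauto.
    + intros (a & b & Hab & Haj & Hbk); split; [apply opair_omega_in_finite_closed; eauto |].
      exists a, b, j, k; auto.
Qed.

Section ImageDigraph.
Variables X T f A v : V.
Hypothesis X_nonempty : exists x, x ∈ X.
Hypothesis X_in_T : X ∈ T.
Hypothesis T_transitive : Defs.transitive mem T.
Hypothesis T_least : forall s, Defs.transitive mem s -> X ∈ s -> subset mem T s.
Hypothesis f_func : is_func mem f.
Hypothesis f_dom : dom_is mem f (fun a => a ∈ T).
Hypothesis f_omega : forall a m, app mem f a m -> m ∈ omega.
Hypothesis f_inj : inj mem f.
Hypothesis A_pairs : forall p, p ∈ A -> exists m n, m ∈ omega /\ n ∈ omega /\ p = opair m n.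
Hypothesis rel_A :
  forall j k, rel mem A j k <-> exists a b, a ∈ b /\ app mem f a j /\ app mem f b k.
Hypothesis f_X : app mem f X v.

Lemma f_in_T a m : app mem f a m -> a ∈ T.
Proof. intro H; apply f_dom; eauto. Qed.

Lemma f_total a : a ∈ T -> exists m, app mem f a m.
Proof. apply f_dom. Qed.

Lemma image_in_fld j : in_fld mem A j -> exists z, z ∈ T /\ app mem f z j.
Proof.
  intros [k [(a & b & _ & Ha & _)%rel_A | (a & b & _ & _ & Hb)%rel_A]];
    eauto using f_in_T.
Qed.

Lemma image_sub_omega2 w : is_omega mem w -> sub_omega2 mem A w.
Proof.
  intros ->%is_omega_eq p (m & n & Hm & Hn & ->)%A_pairs.
  exists m, n; split; [| split]; auto; apply is_opair_eq; reflexivity.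
Qed.

Lemma image_is_digraph : is_digraph mem A.
Proof.
  intros p (m & n & _ & _ & ->)%A_pairs; exists m, n; apply is_opair_eq; reflexivity.
Qed.

Definition fpreimage_in := fEx (fAnd (fapp 2 1 0) (FMem 0 3)).

Lemma sat_fpreimage_in z S e :
  sat mem (scons z (scons f (scons S e))) fpreimage_in <-> exists n, app mem f z n /\ n ∈ S.
Proof. unfold fpreimage_in; sat_simpl; reflexivity. Qed.

(* An A-minimal element of S is the image of an ∈-minimal element of f^-1(S). *)
Lemma image_wf : wf_dg mem A.
Proof.
  intros S [x Hx] HS.
  destruct (separation fpreimage_in (scons f (scons S (fun _ => S))) T) as [S' HS'].
  setoid_rewrite sat_fpreimage_in in HS'.
  destruct (image_in_fld x (HS x Hx)) as (z & Hz & Hzx).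
  destruct (ax_reg M S') as (z0 & [_ (n & Hn & HnS)]%HS' & Hmin); [exists z; apply HS'; eauto |].
  exists n; split; [exact HnS |].
  intros j Hj (a & b & Hab & Haj & Hbn)%rel_A.
  rewrite (f_inj b z0 n Hbn Hn) in Hab.
  apply (Hmin a Hab), HS'; split; [exact (f_in_T a j Haj) | eauto].
Qed.

Lemma image_ext : ext_dg mem A.
Proof.
  intros u w (zu & Hzu & Hu)%image_in_fld (zw & Hzw & Hw)%image_in_fld Hpred.
  assert (Hsub : forall z z' n n', z ∈ T -> app mem f z n -> app mem f z' n' ->
            (forall j, rel mem A j n -> rel mem A j n') -> subset mem z z').
  { intros z z' n n' Hz Hn Hn' Himp y Hy.
    destruct (f_total y (T_transitive y z Hy Hz)) as [k Hk].
    assert (Hkn' : rel mem A k n') by (apply Himp, rel_A; eauto).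
    apply rel_A in Hkn' as (a & b & Hab & Hak & Hbn').
    rewrite (f_inj a y k Hak Hk), (f_inj b z' n' Hbn' Hn') in Hab; exact Hab. }
  assert (zu = zw).
  { apply set_ext; intro y; split; intro Hy.
    - exact (Hsub zu zw u w Hzu Hu Hw (fun j => proj1 (Hpred j)) y Hy).
    - exact (Hsub zw zu w u Hzw Hw Hu (fun j => proj2 (Hpred j)) y Hy). }
  subst zw; exact (app_functional f zu u w f_func Hu Hw).
Qed.

(* The elements of T with a chain to v form a transitive set containing X. *)
Lemma image_chain_to_root z m : z ∈ T -> app mem f z m -> omega_chain A v m.
Proof.
  destruct (separation fchain_image
              (scons f (scons A (scons v (scons omega (scons empty_set (fun _ => X)))))) T)
    as [P HP].
  setoid_rewrite sat_fchain_image in HP.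
  assert (HP_trans : Defs.transitive mem P).
  { intros a b Hab [Hb (n & Hbn & Hn)]%HP.
    assert (Ha : a ∈ T) by exact (T_transitive a b Hab Hb).
    destruct (f_total a Ha) as [k Hk].
    apply HP; split; [exact Ha |]; exists k; split; [exact Hk |].
    apply (omega_chain_cons A v k n (f_omega a k Hk)); [apply rel_A; eauto | exact Hn]. }
  assert (HX_P : X ∈ P).
  { apply HP; split; [exact X_in_T |]; exists v; split; [exact f_X |].
    apply omega_chain_refl; exact (f_omega X v f_X). }
  intros Hz Hzm; apply (T_least P HP_trans HX_P), HP in Hz as [_ (n & Hzn & Hn)].
  rewrite (app_functional f z m n f_func Hzm Hzn); exact Hn.
Qed.

Lemma root_in_fld : in_fld mem A v.
Proof.
  destruct X_nonempty as [x Hx].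
  destruct (f_total x (T_transitive x X Hx X_in_T)) as [m Hm].
  exists m; right; apply rel_A; eauto.
Qed.

Lemma root_is_ver : is_ver mem A v.
Proof.
  split; [exact root_in_fld |].
  intros j (z & Hz & Hzj)%image_in_fld.
  exact (omega_chain_chain A v j (image_chain_to_root z j Hz Hzj)).
Qed.

(* A chain of positive length from v would start with an edge out of v = f(X),
   i.e. X ∈ b for some b ∈ T. *)
Lemma ver_image_unique u : is_ver mem A u -> u = v.
Proof.
  intros [_ Hu]; destruct (Hu v root_in_fld)
    as (w & K & s & c & e & Hw & HK & Hs & Hc & Hdom & He & H0 & HKu & Hstep).
  apply is_omega_eq in Hw; apply is_succ_eq in Hs; apply empty_eq in He; subst w s e.
  assert (HK_succ : K ∈ succ K) by apply succ_self.
  apply (in_succ_omega K HK) in HK_succ as [-> | (m & Hm & Hm_omega & ->)].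
  - exact (app_functional c empty_set u v Hc HKu H0).
  - exfalso.
    assert (H0m : empty_set ∈ succ m) by (apply (in_succ_omega m Hm_omega); auto).
    assert (H1 : succ empty_set ∈ succ (succ m)).
    { apply (in_succ_omega (succ m) HK); right; exists empty_set; auto using empty_set_in_omega. }
    apply Hdom in H1 as [y Hy].
    assert (Hvy : rel mem A v y)
      by (apply (Hstep empty_set (succ empty_set)); auto; apply is_succ_eq; reflexivity).
    apply rel_A in Hvy as (a & b & Hab & Hav & Hby).
    rewrite (f_inj a X v Hav f_X) in Hab.
    exact (notin_mem_least X T X_in_T T_transitive T_least b (f_in_T b y Hby) Hab).
Qed.

Lemma image_vertex : vertex mem A.
Proof. right; exists v; split; [exact root_is_ver | exact ver_image_unique]. Qed.

Definition fcollapse_inverse := FAll (FAll (FImp (fapp 3 2 1) (FImp (fapp 4 1 0) (FEq 0 2)))).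

Lemma sat_fcollapse_inverse z g e :
  sat mem (scons z (scons f (scons g e))) fcollapse_inverse <->
  forall n m, app mem f z n -> app mem g n m -> m = z.
Proof. unfold fcollapse_inverse; sat_simpl; reflexivity. Qed.

(* By ∈-induction on T, the collapse g inverts f: g(f(z)) = z. *)
Lemma collapse_root g X' : Defs.transitive mem X' -> iso_onto mem g A X' -> app mem g v X.
Proof.
  intros HX' (g_func & g_dom & g_ran & _ & g_iso).
  assert (Hinv : forall z, z ∈ T ->
            sat mem (scons z (scons f (scons g (fun _ => X)))) fcollapse_inverse).
  { apply mem_ind; intros z Hz IH; apply sat_fcollapse_inverse; intros n m Hzn Hnm.
    assert (IH' : forall y k y', y ∈ z -> app mem f y k -> app mem g k y' -> y' = y).
    { intros y k y' Hy.
      apply (sat_fcollapse_inverse y g (fun _ => X)), IH;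
        [exact Hy | exact (T_transitive y z Hy Hz)]. }
    apply set_ext; intro y; split; intro Hy.
    - assert (HyX' : y ∈ X') by (apply (HX' y m Hy), g_ran; eauto).
      apply g_ran in HyX' as [k Hk].
      assert (Hkn : rel mem A k n) by exact (proj2 (g_iso k n y m Hk Hnm) Hy).
      apply rel_A in Hkn as (a & b & Hab & Hak & Hbn).
      rewrite (f_inj b z n Hbn Hzn) in Hab.
      rewrite (IH' a k y Hab Hak Hk); exact Hab.
    - destruct (f_total y (T_transitive y z Hy Hz)) as [k Hk].
      assert (Hkn : rel mem A k n) by (apply rel_A; eauto).
      destruct (proj1 (g_dom k) (ex_intro _ n (or_introl Hkn))) as [y' Hky'].
      rewrite <- (IH' y k y' Hy Hk Hky'); exact (proj1 (g_iso k n y' m Hky' Hnm) Hkn). }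
  destruct (proj1 (g_dom v) root_in_fld) as [X0 HX0].
  rewrite <- (proj1 (sat_fcollapse_inverse X g _) (Hinv X X_in_T) v X0 f_X HX0); exact HX0.
Qed.

Lemma image_denotes : denotes mem A X.
Proof.
  right; destruct (ax_MC M A image_is_digraph image_wf image_ext) as (X' & g & HX' & Hg).
  exists v, g; split; [exact root_is_ver |]; split; [exists X'; auto |].
  exact (collapse_root g X' HX' Hg).
Qed.

Lemma image_codes : codes mem A X.
Proof.
  split; [exact image_sub_omega2 |]; split; [exact image_is_digraph |].
  split; [exact image_wf |]; split; [exact image_ext |].
  split; [exact image_vertex | exact image_denotes].
Qed.

End ImageDigraph.
End FiniteClosed.

Lemma rel_empty_set j k : ~ rel mem empty_set j k.
Proof. intros (p & Hp & _); exact (notin_empty_set p Hp). Qed.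

Lemma empty_set_codes X : ~ (exists x, x ∈ X) -> codes mem empty_set X.
Proof.
  intro HX.
  assert (Hfld : forall j, ~ in_fld mem empty_set j)
    by (intros j [k [H | H]]; exact (rel_empty_set _ _ H)).
  split; [intros w _ p Hp; destruct (notin_empty_set p Hp) |].
  split; [intros p Hp; destruct (notin_empty_set p Hp) |].
  split; [intros S [x Hx] HS; destruct (Hfld x (HS x Hx)) |].
  split; [intros u w Hu; destruct (Hfld u Hu) |].
  split; [left; exact notin_empty_set |].
  left; split; [exact notin_empty_set | intros x Hx; eauto].
Qed.

End Model.

Theorem lemma8p4 (M : ZFTM) (X : zV M) :
  exists A : zV M,
    (forall w, is_omega (zmem M) w -> sub_omega2 (zmem M) A w) /\
    is_digraph (zmem M) A /\ wf_dg (zmem M) A /\ ext_dg (zmem M) A /\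
    vertex (zmem M) A /\ denotes (zmem M) A X.
Proof.
  destruct (classic (exists x, zmem M x X)) as [HX | HX].
  - destruct (least_transitive_exists M X) as (T & HXT & HT & HT_least).
    destruct (ax_count M T) as (w & f & Hw & Hf & Hdom & Hval & Hinj).
    apply is_omega_eq in Hw; subst w.
    destruct (ax_FC M (omega M)) as (Y & HY_omega & HY_finite).
    destruct (image_digraph_exists M Y HY_omega HY_finite f Hval) as (A & HA_pairs & HA_rel).
    destruct (proj1 (Hdom X) HXT) as [v Hv].
    exists A; exact (image_codes M Y HY_omega HY_finite X T f A v
                       HX HXT HT HT_least Hf Hdom Hval Hinj HA_pairs HA_rel Hv).
  - exists (empty_set M); exact (empty_set_codes M X HX).
Qed.
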